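(* For every positive integer $m$ and every complex number $\alpha \neq 0$, $$\sum_{k=1}^m \frac{k^\alpha}{m-k+1} = \sum_{j=1}^m j!\, S(\alpha, j) \binom{m+1}{j} \left(H_{m+1} - H_j\right).$$
   Context: For a complex number $\alpha \neq 0$ and a positive integer $k$, the Stirling function of the second kind is $$S(\alpha, k) = \frac{1}{k!} \sum_{j=1}^k (-1)^{k-j} \binom{k}{j} j^\alpha,$$ where for a positive integer $j$, $j^\alpha = e^{\alpha \ln j}$ with $\ln j$ the real logarithm. $H_k = 1 + \frac12 + \cdots + \frac1k$ denotes the $k$-th harmonic number. *)

From Stdlib Require Import Reals Arith Factorial.
Open Scope R_scope.

Record Cplx := mkC { Re : R ; Im : R }.

Definition C0 : Cplx := mkC 0 0.
Definition Cadd (z w : Cplx) : Cplx := mkC (Re z + Re w) (Im z + Im w).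
Definition Cmul (z w : Cplx) : Cplx :=
  mkC (Re z * Re w - Im z * Im w) (Re z * Im w + Im z * Re w).
Definition RtoC (r : R) : Cplx := mkC r 0.
Definition Cscale (r : R) (z : Cplx) : Cplx := Cmul (RtoC r) z.

Definition Cexp (z : Cplx) : Cplx :=
  mkC (exp (Re z) * cos (Im z)) (exp (Re z) * sin (Im z)).

Definition cpow (j : nat) (alpha : Cplx) : Cplx :=
  Cexp (Cmul alpha (RtoC (ln (INR j)))).

Fixpoint Csum1 (n : nat) (f : nat -> Cplx) : Cplx :=
  match n with
  | O => C0
  | S n' => Cadd (Csum1 n' f) (f (S n'))
  end.

Fixpoint Rsum1 (n : nat) (f : nat -> R) : R :=
  match n with
  | O => 0
  | S n' => Rsum1 n' f + f (S n')
  end.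

Definition harm (k : nat) : R := Rsum1 k (fun i => / INR i).

Definition stirling2 (alpha : Cplx) (k : nat) : Cplx :=
  Cscale (/ INR (fact k))
    (Csum1 k (fun j => Cscale ((-1) ^ (k - j) * C k j) (cpow j alpha))).

(* The identity is linear in the values j^alpha: we prove it for an arbitrary
   sequence of complex numbers v_1, v_2, ... in place of j^alpha.  Projecting
   onto real and imaginary parts reduces this to a real identity.  Expanding
   the Stirling functions and exchanging the two summations, the coefficient
   of v_i on the right-hand side is, with N = m - i,
     C(m+1,i) * sum_{l=0}^{N} (-1)^l C(N+1,l) (H_{m+1} - H_{i+l}),
   an (N+1)-st alternating difference of harmonic numbers.  The difference of
   H_{i+l} is a difference of 1/(i+1+l), and the N-th alternating difference
   of 1/(d+1+l) is the Beta value N! d! / (N+d+1)!.  Hence the coefficient is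
   1/(N+1) = 1/(m-i+1), which is the coefficient of v_i on the left. *)
From Stdlib Require Import Reals Arith Factorial Lra Lia.
Open Scope R_scope.

(* Binomial coefficients by Pascal's rule; unlike [C] they vanish above the
   diagonal, which makes the Pascal recursion valid at the boundary. *)
Fixpoint binom (n k : nat) : R :=
  match n, k with
  | O, O => 1
  | O, S _ => 0
  | S _, O => 1
  | S n', S k' => binom n' k' + binom n' (S k')
  end.

Lemma binom_above (n k : nat) : (n < k)%nat -> binom n k = 0.
Proof.
  revert k; induction n as [|n IH]; intros [|k] Hk; try lia; simpl; auto.
  rewrite !IH by lia; lra.
Qed.

Lemma C_n_0 (n : nat) : C n 0 = 1.
Proof. unfold C; rewrite Nat.sub_0_r; simpl; field; apply INR_fact_neq_0. Qed.

Lemma C_n_n (n : nat) : C n n = 1.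
Proof. unfold C; rewrite Nat.sub_diag; simpl; field; apply INR_fact_neq_0. Qed.

Lemma binom_C (n k : nat) : (k <= n)%nat -> binom n k = C n k.
Proof.
  revert k; induction n as [|n IH]; intros [|k] Hk.
  - simpl; rewrite C_n_0; reflexivity.
  - lia.
  - simpl; rewrite C_n_0; reflexivity.
  - simpl; destruct (Nat.eq_dec k n) as [-> | Hne].
    + rewrite (binom_above n (S n)), IH, !C_n_n by lia; lra.
    + rewrite !IH by lia; apply pascal; lia.
Qed.

Lemma C_mul_C (n k i : nat) :
  (i <= k <= n)%nat -> C n k * C k i = C n i * C (n - i) (k - i).
Proof.
  intros Hik; unfold C.
  replace (n - i - (k - i))%nat with (n - k)%nat by lia.
  pose proof (INR_fact_neq_0 n); pose proof (INR_fact_neq_0 k).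
  pose proof (INR_fact_neq_0 i); pose proof (INR_fact_neq_0 (n - k)).
  pose proof (INR_fact_neq_0 (k - i)); pose proof (INR_fact_neq_0 (n - i)).
  field; repeat split; assumption.
Qed.

Lemma INR_fact_S (n : nat) : INR (fact (S n)) = INR (S n) * INR (fact n).
Proof. apply mult_INR. Qed.

Definition altdiff (N : nat) (a : nat -> R) : R :=
  sum_f_R0 (fun l => (-1) ^ l * binom N l * a l) N.

Lemma altdiff_ext (N : nat) (a b : nat -> R) :
  (forall l, (l <= N)%nat -> a l = b l) -> altdiff N a = altdiff N b.
Proof. intros Hab; apply sum_eq; intros l Hl; rewrite Hab; auto. Qed.

Lemma altdiff_minus (N : nat) (a b : nat -> R) :
  altdiff N (fun l => a l - b l) = altdiff N a - altdiff N b.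
Proof. unfold altdiff; rewrite <- minus_sum; apply sum_eq; intros; ring. Qed.

(* Pascal's rule: one more difference is a difference of the forward
   differences a_l - a_{l+1}. *)
Lemma altdiff_S (N : nat) (a : nat -> R) :
  altdiff (S N) a = altdiff N (fun l => a l - a (S l)).
Proof.
  unfold altdiff; rewrite decomp_sum by lia; simpl pred.
  assert (Hsplit : sum_f_R0 (fun i => (-1) ^ S i * binom (S N) (S i) * a (S i)) N =
    sum_f_R0 (fun i => (-1) ^ S i * binom N (S i) * a (S i)) N -
    sum_f_R0 (fun i => (-1) ^ i * binom N i * a (S i)) N).
  { rewrite <- minus_sum; apply sum_eq; intros i _; simpl; ring. }
  assert (Hshift : a 0%nat + sum_f_R0 (fun i => (-1) ^ S i * binom N (S i) * a (S i)) N
                   = sum_f_R0 (fun l => (-1) ^ l * binom N l * a l) N).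
  { destruct N as [|N]; [simpl; ring|].
    rewrite (decomp_sum (fun l => (-1) ^ l * binom (S N) l * a l)) by lia.
    simpl pred; rewrite tech5, binom_above by lia; simpl; ring. }
  assert (Hdiff : sum_f_R0 (fun l => (-1) ^ l * binom N l * (a l - a (S l))) N =
    sum_f_R0 (fun l => (-1) ^ l * binom N l * a l) N -
    sum_f_R0 (fun i => (-1) ^ i * binom N i * a (S i)) N).
  { rewrite <- minus_sum; apply sum_eq; intros; ring. }
  rewrite Hsplit, Hdiff, <- Hshift; simpl; ring.
Qed.

Lemma altdiff_const (N : nat) (c : R) : altdiff (S N) (fun _ => c) = 0.
Proof.
  rewrite altdiff_S; unfold altdiff.
  apply sum_eq_R0; intros; ring.
Qed.

Lemma altdiff_recip (N d : nat) :
  altdiff N (fun l => / INR (S d + l)) =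
  INR (fact N) * INR (fact d) / INR (fact (N + S d)).
Proof.
  revert d; induction N as [|N IH]; intro d.
  - unfold altdiff; cbn [sum_f_R0 binom pow].
    rewrite Nat.add_0_r, Nat.add_0_l, INR_fact_S; change (INR (fact 0)) with 1.
    field; split; [apply INR_fact_neq_0 | apply not_0_INR; lia].
  - rewrite altdiff_S.
    rewrite (altdiff_ext N _ (fun l => / INR (S d + l) - / INR (S (S d) + l)))
      by (intros l _; do 3 f_equal; lia).
    rewrite altdiff_minus, !IH.
    replace (N + S (S d))%nat with (S (N + S d)) by lia.
    replace (S N + S d)%nat with (S (N + S d)) by lia.
    rewrite !INR_fact_S, !S_INR, !plus_INR, !S_INR.
    pose proof (INR_fact_neq_0 (N + S d)); pose proof (INR_fact_neq_0 d).
    pose proof (pos_INR N); pose proof (pos_INR d).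
    field; repeat split; auto; lra.
Qed.

Lemma harm_S (k : nat) : harm (S k) = harm k + / INR (S k).
Proof. reflexivity. Qed.

(* Since H_{i+l+1} - H_{i+l} = 1/(i+1+l), differences of harmonic numbers are
   (negated) Beta values. *)
Lemma altdiff_harm (N i : nat) :
  altdiff (S N) (fun l => harm (i + l)) =
  - (INR (fact N) * INR (fact i) / INR (fact (N + S i))).
Proof.
  rewrite altdiff_S.
  rewrite (altdiff_ext N _ (fun l => - / INR (S i + l))).
  2: { intros l _; rewrite Nat.add_succ_r, harm_S; simpl (S i + l)%nat; ring. }
  transitivity (-1 * altdiff N (fun l => / INR (S i + l)));
    [| rewrite altdiff_recip; ring].
  unfold altdiff; rewrite scal_sum; apply sum_eq; intros; ring.
Qed.

(* The coefficient of v_i in the expanded right-hand side, with N = m - i. *)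
Lemma coefficient_identity (i N : nat) :
  sum_f_R0 (fun l => C (i + N + 1) (i + l) * (harm (i + N + 1) - harm (i + l)) *
                     ((-1) ^ l * C (i + l) i)) N = / INR (N + 1).
Proof.
  set (D l := harm (i + N + 1) - harm (i + l)).
  rewrite (sum_eq _ (fun l => (-1) ^ l * binom (S N) l * D l * C (i + N + 1) i)).
  2: { intros l Hl; rewrite binom_C by lia.
       transitivity (C (i + N + 1) (i + l) * C (i + l) i * ((-1) ^ l * D l)); [unfold D; ring|].
       rewrite C_mul_C by lia.
       replace (i + N + 1 - i)%nat with (S N) by lia.
       replace (i + l - i)%nat with l by lia; ring. }
  rewrite <- scal_sum.
  (* the l = N+1 term vanishes, since it contains H_{i+N+1} - H_{i+N+1} *)
  assert (Hlast : sum_f_R0 (fun l => (-1) ^ l * binom (S N) l * D l) N = altdiff (S N) D).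
  { unfold altdiff; rewrite tech5; unfold D.
    replace (i + S N)%nat with (i + N + 1)%nat by lia; ring. }
  rewrite Hlast; unfold D; rewrite altdiff_minus, altdiff_const, altdiff_harm.
  unfold C; replace (i + N + 1 - i)%nat with (S N) by lia.
  replace (N + S i)%nat with (i + N + 1)%nat by lia.
  rewrite INR_fact_S, plus_INR; simpl (INR 1).
  pose proof (INR_fact_neq_0 (i + N + 1)); pose proof (INR_fact_neq_0 N).
  pose proof (INR_fact_neq_0 i); pose proof (pos_INR N).
  rewrite S_INR; field; repeat split; auto; lra.
Qed.

Lemma Rsum1_S (n : nat) (f : nat -> R) : Rsum1 (S n) f = Rsum1 n f + f (S n).
Proof. reflexivity. Qed.

Lemma Rsum1_ext_in (n : nat) (f g : nat -> R) :
  (forall k, (1 <= k <= n)%nat -> f k = g k) -> Rsum1 n f = Rsum1 n g.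
Proof.
  induction n as [|n IH]; intros Hfg; simpl; auto.
  rewrite (IH (fun k Hk => Hfg k ltac:(lia))), Hfg by lia; reflexivity.
Qed.

Lemma Rsum1_plus (n : nat) (f g : nat -> R) :
  Rsum1 n (fun k => f k + g k) = Rsum1 n f + Rsum1 n g.
Proof. induction n as [|n IH]; simpl; [ring | rewrite IH; ring]. Qed.

Lemma Rsum1_scal (n : nat) (c : R) (f : nat -> R) :
  Rsum1 n (fun k => c * f k) = c * Rsum1 n f.
Proof. induction n as [|n IH]; simpl; [ring | rewrite IH; ring]. Qed.

Lemma Rsum1_triangle (m : nat) (a : nat -> nat -> R) :
  Rsum1 m (fun j => Rsum1 j (fun i => a i j)) =
  Rsum1 m (fun i => sum_f_R0 (fun l => a i (i + l)%nat) (m - i)).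
Proof.
  induction m as [|m IH]; [reflexivity|].
  rewrite Rsum1_S, IH, (Rsum1_S m (fun i => a i (S m))).
  rewrite (Rsum1_S m (fun i => sum_f_R0 (fun l => a i (i + l)%nat) (S m - i))).
  rewrite (Rsum1_ext_in m (fun i => sum_f_R0 (fun l => a i (i + l)%nat) (S m - i))
             (fun i => sum_f_R0 (fun l => a i (i + l)%nat) (m - i) + a i (S m))).
  2: { intros i Hi; replace (S m - i)%nat with (S (m - i)) by lia.
       rewrite tech5; do 2 f_equal; lia. }
  rewrite Nat.sub_diag; simpl sum_f_R0; rewrite Nat.add_0_r.
  rewrite Rsum1_plus; ring.
Qed.

Lemma stirling_inversion_real (x : nat -> R) (m : nat) :
  Rsum1 m (fun k => / INR (m - k + 1) * x k) =
  Rsum1 m (fun j => (INR (fact j) * C (m + 1) j * (harm (m + 1) - harm j)) *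
     (/ INR (fact j) * Rsum1 j (fun i => ((-1) ^ (j - i) * C j i) * x i))).
Proof.
  set (c i j := C (m + 1) j * (harm (m + 1) - harm j) * ((-1) ^ (j - i) * C j i)).
  symmetry; rewrite (Rsum1_ext_in m _ (fun j => Rsum1 j (fun i => c i j * x i))).
  2: { intros j _; pose proof (INR_fact_neq_0 j).
       rewrite <- Rsum1_scal, <- Rsum1_scal; apply Rsum1_ext_in; intros i _.
       unfold c; field; assumption. }
  rewrite Rsum1_triangle; apply Rsum1_ext_in; intros i Hi.
  rewrite <- scal_sum; unfold c.
  replace (m + 1)%nat with (i + (m - i) + 1)%nat by lia.
  rewrite (sum_eq _ (fun l => C (i + (m - i) + 1) (i + l) *
      (harm (i + (m - i) + 1) - harm (i + l)) * ((-1) ^ l * C (i + l) i))).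
  2: { intros l _; replace (i + l - i)%nat with l by lia; reflexivity. }
  rewrite coefficient_identity; replace (i + (m - i) + 1 - i)%nat with (m - i + 1)%nat by lia.
  ring.
Qed.

Lemma Cplx_ext (z w : Cplx) : Re z = Re w -> Im z = Im w -> z = w.
Proof. destruct z, w; simpl; intros -> ->; reflexivity. Qed.

Section Projection.
Variable p : Cplx -> R.
Hypothesis p_add : forall z w, p (Cadd z w) = p z + p w.
Hypothesis p_zero : p C0 = 0.
Hypothesis p_scale : forall r z, p (Cscale r z) = r * p z.

Lemma proj_Csum1 (n : nat) (f : nat -> Cplx) : p (Csum1 n f) = Rsum1 n (fun k => p (f k)).
Proof. induction n as [|n IH]; simpl; [auto | rewrite p_add, IH; reflexivity]. Qed.

Lemma proj_stirling_inversion (v : nat -> Cplx) (m : nat) :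
  p (Csum1 m (fun k => Cscale (/ INR (m - k + 1)) (v k))) =
  p (Csum1 m (fun j => Cscale (INR (fact j) * C (m + 1) j * (harm (m + 1) - harm j))
       (Cscale (/ INR (fact j)) (Csum1 j (fun i => Cscale ((-1) ^ (j - i) * C j i) (v i)))))).
Proof.
  rewrite !proj_Csum1.
  rewrite (Rsum1_ext_in m _ (fun k => / INR (m - k + 1) * p (v k)))
    by (intros; apply p_scale).
  rewrite (stirling_inversion_real (fun i => p (v i))).
  apply Rsum1_ext_in; intros j _.
  rewrite !p_scale, proj_Csum1; do 2 f_equal.
  apply Rsum1_ext_in; intros i _; symmetry; apply p_scale.
Qed.
End Projection.

Lemma Re_Cscale (r : R) (z : Cplx) : Re (Cscale r z) = r * Re z.
Proof. simpl; ring. Qed.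

Lemma Im_Cscale (r : R) (z : Cplx) : Im (Cscale r z) = r * Im z.
Proof. simpl; ring. Qed.

(* The identity holds for any values v_j in place of j^alpha. *)
Theorem proposition4 (m : nat) (alpha : Cplx) :
  (1 <= m)%nat -> alpha <> C0 ->
  Csum1 m (fun k => Cscale (/ INR (m - k + 1)) (cpow k alpha)) =
  Csum1 m (fun j => Cscale (INR (fact j) * C (m + 1) j * (harm (m + 1) - harm j))
                           (stirling2 alpha j)).
Proof.
  intros _ _; apply Cplx_ext.
  - exact (proj_stirling_inversion Re (fun _ _ => eq_refl) eq_refl Re_Cscale
             (fun k => cpow k alpha) m).
  - exact (proj_stirling_inversion Im (fun _ _ => eq_refl) eq_refl Im_Cscale
             (fun k => cpow k alpha) m).
Qed.
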